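(* Let $\mathbb{F}_q$ be a finite field and let $\mathcal{M}=\mathbb{F}_q\times\mathbb{F}_q^{*}\times\mathbb{F}_q$ with the relation: $(x_1,y_1,z_1)$ and $(x_2,y_2,z_2)$ commute iff $x_1y_2-y_1x_2=z_1-z_2$. Then: (1) every abelian subset of $\mathcal{M}$ has cardinality at most $q$; (2) there is no partition of $\mathcal{M}$ into fewer than $q(q-1)$ abelian subsets; (3) the maximum cardinality of an abelian subset of $\mathcal{M}$ that is not contained in a strictly larger abelian subset is $q$.
   Context: A subset of $\mathcal{M}$ is abelian if any two distinct elements of it commute. *)

From mathcomp Require Import all_boot all_order all_algebra all_field.
Set Implicit Arguments. Unset Strict Implicit. Unset Printing Implicit Defensive.
Import GRing.Theory.
Local Open Scope ring_scope.

(* Elements of M = F_q x F_q^* x F_q are represented as triples ((x, y), z)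
   of F * F * F, restricted to the set Mset where y != 0. *)
Definition Mset (F : finFieldType) : {set F * F * F} :=
  [set t : F * F * F | t.1.2 != 0].

Definition Mcommute (F : finFieldType) (u v : F * F * F) : bool :=
  u.1.1 * v.1.2 - u.1.2 * v.1.1 == u.2 - v.2.

Definition Mabelian (F : finFieldType) (A : {set F * F * F}) : bool :=
  [forall u in A, forall v in A, (u != v) ==> Mcommute u v].

Definition Mabelian_sub (F : finFieldType) (A : {set F * F * F}) : bool :=
  (A \subset Mset F) && Mabelian A.

From mathcomp Require Import all_boot all_order all_algebra all_field.
From mathcomp Require Import ring.
Set Implicit Arguments. Unset Strict Implicit. Unset Printing Implicit Defensive.
Import GRing.Theory.
Local Open Scope ring_scope.

(* Within an abelian set the point (x, y) determines z, and subtracting the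
   commutation relations of v with u and with w from the one of u with w shows
   that the points (x, y) of the set lie on one affine line of F^2, which has
   q points.  Hence abelian sets have at most q elements; the "diagonal"
   {(t, 1, t)} attains this bound, and since #|M| = q (q - 1) q every partition
   into abelian sets has at least q (q - 1) blocks. *)

Lemma card_partition_le (T : finType) (P : {set {set T}}) (D : {set T}) k :
  partition P D -> {in P, forall B : {set T}, (#|B| <= k)%N} ->
  (#|D| <= #|P| * k)%N.
Proof.
move=> partP leBk; rewrite (card_partition partP) -sum_nat_const.
exact: leq_sum.
Qed.

Section AbelianSubsets.

Variable F : finFieldType.
Implicit Types (A : {set F * F * F}) (u v w : F * F * F).

Lemma card_collinear_le (S : {set F * F}) (p r : F * F) : p != r ->
  {in S, forall s, (s.1 - p.1) * (r.2 - p.2) = (s.2 - p.2) * (r.1 - p.1)} ->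
  (#|S| <= #|F|)%N.
Proof.
move=> neq_pr onS.
have card_le (f : F * F -> F) : {in S &, injective f} -> (#|S| <= #|F|)%N.
  by move=> injf; rewrite -(card_in_imset injf) max_card.
have [d1_0|d1_neq0] := eqVneq (r.1 - p.1) 0.
- have d2_neq0 : r.2 - p.2 != 0.
    apply: contra neq_pr; move/eqP: d1_0; rewrite !subr_eq0 => /eqP e1 /eqP e2.
    by case: (p) (r) e1 e2 => ? ? [? ?] /= -> ->.
  apply: (card_le snd) => s t sS tS e.
  have /(mulIf d2_neq0)/addIr : (s.1 - p.1) * (r.2 - p.2) = (t.1 - p.1) * (r.2 - p.2).
    by rewrite onS // onS // e.
  by case: (s) (t) e => ? ? [? ?] /= -> ->.
- apply: (card_le fst) => s t sS tS e.
  have /(mulIf d1_neq0)/addIr : (s.2 - p.2) * (r.1 - p.1) = (t.2 - p.2) * (r.1 - p.1).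
    by rewrite -onS // -onS // e.
  by case: (s) (t) e => ? ? [? ?] /= -> ->.
Qed.

Lemma Mabelian_commute A : Mabelian A ->
  {in A &, forall u v, u.1.1 * v.1.2 - u.1.2 * v.1.1 = u.2 - v.2}.
Proof.
move=> /forallP abA u v uA vA; have [->|neq_uv] := eqVneq u v.
  by rewrite [X in X - _]mulrC !subrr.
by have /forall_inP/(_ v vA) := implyP (abA u) uA; rewrite neq_uv => /eqP.
Qed.

Lemma Mabelian_fst_inj A : Mabelian A -> {in A &, injective fst}.
Proof.
move=> /Mabelian_commute comm [[x y] z] [[x' y'] z'] uA vA /= [ex ey].
subst x' y'.
have /= := comm _ _ uA vA; rewrite mulrC subrr => /eqP.
by rewrite eq_sym subr_eq0 => /eqP ->.
Qed.

Lemma Mabelian_collinear A u w : Mabelian A -> u \in A -> w \in A ->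
  {in A, forall v,
    (v.1.1 - u.1.1) * (w.1.2 - u.1.2) = (v.1.2 - u.1.2) * (w.1.1 - u.1.1)}.
Proof.
move=> /Mabelian_commute comm uA wA v vA; apply/eqP; rewrite -subr_eq0.
have -> : (v.1.1 - u.1.1) * (w.1.2 - u.1.2) - (v.1.2 - u.1.2) * (w.1.1 - u.1.1)
    = (v.1.1 * w.1.2 - v.1.2 * w.1.1) - (v.1.1 * u.1.2 - v.1.2 * u.1.1)
      - (u.1.1 * w.1.2 - u.1.2 * w.1.1) by ring.
by rewrite comm // comm // comm //; apply/eqP; ring.
Qed.

Lemma Mabelian_card_le A : Mabelian A -> (#|A| <= #|F|)%N.
Proof.
move=> abA; case: (leqP #|A| 1) => [A_le1|/card_gt1P[u [w [uA wA neq_uw]]]].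
  by apply: leq_trans A_le1 _; apply/card_gt0P; exists 0.
rewrite -(card_in_imset (Mabelian_fst_inj abA)).
apply: (@card_collinear_le _ u.1 w.1).
  by apply: contra neq_uw => /eqP/(Mabelian_fst_inj abA uA wA) ->.
by move=> _ /imsetP[v vA ->]; exact: (Mabelian_collinear abA uA wA vA).
Qed.

Lemma card_Mset : #|Mset F| = (#|F| * (#|F| - 1) * #|F|)%N.
Proof.
have -> : Mset F = setX (setX [set: F] [set~ 0]) [set: F].
  by apply/setP => -[[x y] z]; rewrite !inE /= andbT.
by rewrite !cardsX cardsC1 cardsT subn1.
Qed.

Definition Mdiag : {set F * F * F} := [set ((t, 1), t) | t : F].

Lemma Mdiag_abelian_sub : Mabelian_sub Mdiag.
Proof.
apply/andP; split.
  by apply/subsetP => _ /imsetP[t _ ->]; rewrite inE /= oner_neq0.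
apply/forall_inP => _ /imsetP[t _ ->]; apply/forall_inP => _ /imsetP[s _ ->].
by apply/implyP => _; rewrite /Mcommute /= mulr1 mul1r.
Qed.

Lemma card_Mdiag : #|Mdiag| = #|F|.
Proof. by rewrite card_imset // => s t []. Qed.

Lemma maxset_Mabelian_sub A : Mabelian_sub A -> #|A| = #|F| ->
  maxset (@Mabelian_sub F) A.
Proof.
move=> abA cardA; apply/maxsetP; split => // B /andP[_ abB] sAB.
by apply/eqP; rewrite eq_sym eqEcard sAB cardA Mabelian_card_le.
Qed.

End AbelianSubsets.

Theorem theorem6p6 (F : finFieldType) :
  (forall A : {set F * F * F}, Mabelian_sub A -> (#|A| <= #|F|)%N)
  /\ (forall P : {set {set F * F * F}},
        partition P (Mset F) -> (forall B, B \in P -> Mabelian B) ->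
        (#|F| * (#|F| - 1) <= #|P|)%N)
  /\ ((exists A : {set F * F * F}, maxset (@Mabelian_sub F) A /\ #|A| = #|F|)
      /\ (forall A : {set F * F * F}, maxset (@Mabelian_sub F) A -> (#|A| <= #|F|)%N)).
Proof.
have card_le (A : {set F * F * F}) : Mabelian_sub A -> (#|A| <= #|F|)%N.
  by case/andP=> _; apply: Mabelian_card_le.
split; first exact: card_le.
split.
  move=> P partP abP; have F_gt0 : (0 < #|F|)%N by apply/card_gt0P; exists 0.
  rewrite -(leq_pmul2r F_gt0) -card_Mset.
  by apply: card_partition_le partP _ => B /abP /Mabelian_card_le.
split; last by move=> A /maxsetP[/card_le].
exists (Mdiag F); split; last exact: card_Mdiag.
exact: maxset_Mabelian_sub (Mdiag_abelian_sub F) (card_Mdiag F).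
Qed.
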